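(* Let $u_0,\dots,u_4$ be pairwise distinct complex numbers with $M_i(U)\neq 0$ for all $i$, let $Y\subset\mathbb{P}^4=\mathrm{Proj}\,\mathbb{C}[v_0,\dots,v_4]$ be the quintic $\sum_iM_i(U)v_i^5=0$ (the Fermat quintic after a diagonal rescaling of coordinates), and let $\Lambda$ be the plane $\sum_iM_i(U)v_i=0,\ \sum_iM_i(U)u_i^4v_i=0$. Let $P=(1,1,1,1,1)$, $Q=(u_0,\dots,u_4)$ and $R=(l_0,\dots,l_4)$ be vectors spanning $\Lambda$, and use coordinates $[x:y:z]$ on $\Lambda$ for the point $xP+yQ+zR$. Define $S_{mn}$ by $\delta(U)S_{mn}=\sum_{i=0}^4M_i(U)u_i^ml_i^n$, and let $\alpha,\beta$ satisfy $S_{30}\alpha^2+2S_{31}\alpha+S_{32}=0$ and $S_{20}\beta^2+2S_{11}\beta+S_{02}=0$. Then the plane $\Lambda$ cuts $Y$ along a conic of the form $d z^2-(\beta x+\alpha y)z+xy=0$ and a cubic (possibly degenerate) passing through $P$ and $Q$ if and only if the following equations are satisfied for some parameter $d\in\mathbb{C}$: $10S_{03}+\beta g_2(P)-g_1(P)d=0$, $10S_{23}+\alpha g_2(Q)-g_1(Q)d=0$, $5S_{04}+\beta g_3-g_2(P)d=0$, $5S_{14}+\alpha g_3-g_2(Q)d=0$, $S_{05}-g_3d=0$, where $g_1(P)=20S_{11}+10S_{20}\beta$, $g_1(Q)=20S_{31}+10S_{30}\alpha$, $g_{1xy}=30S_{21}+10S_{20}\alpha+10S_{30}\beta$, $g_2(P)=30S_{12}+\alpha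 g_1(P)+\beta g_{1xy}-10S_{20}d$, $g_2(Q)=30S_{22}+\beta g_1(Q)+\alpha g_{1xy}-10S_{30}d$, $g_3=20S_{13}+\alpha g_2(P)+\beta g_2(Q)-dg_{1xy}$.
   Context: For $U=(u_0,\dots,u_4)$: $\delta(U)=\prod_{j>k}(u_j-u_k)$; for each $i$, $e_1(i),e_2(i),e_3(i)$ are the elementary symmetric polynomials in $\{u_j\}_{j\neq i}$; $d_i=\prod_{j,k\neq i,\,j>k}(u_j-u_k)$; $n_i=e_2(i)^2-e_1(i)e_3(i)$; $M_i(U)=(-1)^id_in_i$. These satisfy $\sum_iM_i(U)u_i^k=0$ for $k\in\{0,1,4,5\}$, so $P,Q\in Y\cap\Lambda$. The quantities $S_{mn}$ are polynomial in the $u_i$ and $l_i$; in particular $S_{20}=e_2$ and $S_{30}=e_3$ (elementary symmetric polynomials of $u_0,\dots,u_4$). *)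

(* Complex numbers are modelled as R[i] for an arbitrary
   R : realType (complete archimedean ordered field, i.e. the reals). *)
From HB Require Import structures.
From mathcomp Require Import all_boot all_order all_algebra.
From mathcomp Require Import reals.
From mathcomp.real_closed Require Export complex.
Set Implicit Arguments. Unset Strict Implicit. Unset Printing Implicit Defensive.
Import Order.TTheory GRing.Theory Num.Theory.
Local Open Scope ring_scope.

Section Defs.
Variable C : fieldType.
Implicit Types (u l : 'I_5 -> C).

Definition delta u : C :=
  \prod_(j < 5) \prod_(k < 5 | (k < j)%N) (u j - u k).

Definition e1 u (i : 'I_5) : C := \sum_(j < 5 | j != i) u j.
Definition e2 u (i : 'I_5) : C :=
  \sum_(j < 5 | j != i) \sum_(k < 5 | (k != i) && (j < k)%N) u j * u k.
Definition e3 u (i : 'I_5) : C :=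
  \sum_(j < 5 | j != i) \sum_(k < 5 | (k != i) && (j < k)%N)
     \sum_(m < 5 | (m != i) && (k < m)%N) u j * u k * u m.

Definition dd u (i : 'I_5) : C :=
  \prod_(j < 5 | j != i) \prod_(k < 5 | (k != i) && (k < j)%N) (u j - u k).

Definition nn u (i : 'I_5) : C := e2 u i ^+ 2 - e1 u i * e3 u i.

Definition M u (i : 'I_5) : C := (-1) ^+ i * dd u i * nn u i.

Definition S u l (m n : nat) : C :=
  (\sum_(i < 5) M u i * u i ^+ m * l i ^+ n) / delta u.

Definition inLambda u (v : 'I_5 -> C) : Prop :=
  \sum_(i < 5) M u i * v i = 0 /\ \sum_(i < 5) M u i * u i ^+ 4 * v i = 0.

(* the quintic of Y restricted to Lambda, in coordinates [x:y:z] for xP+yQ+zR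
   with P = (1,..,1), Q = u, R = l *)
Definition Fres u l (x y z : C) : C :=
  \sum_(i < 5) M u i * (x + y * u i + z * l i) ^+ 5.

Definition conic (d alpha beta x y z : C) : C :=
  d * z ^+ 2 - (beta * x + alpha * y) * z + x * y.

Definition cubic (k : nat -> nat -> C) (x y z : C) : C :=
  \sum_(a < 4) \sum_(b < 4 - a) k a b * x ^+ a * y ^+ b * z ^+ (3 - a - b).

Definition g1P u l beta : C := 20%:R * S u l 1 1 + 10%:R * S u l 2 0 * beta.
Definition g1Q u l alpha : C := 20%:R * S u l 3 1 + 10%:R * S u l 3 0 * alpha.
Definition g1xy u l alpha beta : C :=
  30%:R * S u l 2 1 + 10%:R * S u l 2 0 * alpha + 10%:R * S u l 3 0 * beta.
Definition g2P u l alpha beta d : C :=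
  30%:R * S u l 1 2 + alpha * g1P u l beta + beta * g1xy u l alpha beta
  - 10%:R * S u l 2 0 * d.
Definition g2Q u l alpha beta d : C :=
  30%:R * S u l 2 2 + beta * g1Q u l alpha + alpha * g1xy u l alpha beta
  - 10%:R * S u l 3 0 * d.
Definition g3 u l alpha beta d : C :=
  20%:R * S u l 1 3 + alpha * g2P u l alpha beta d + beta * g2Q u l alpha beta d
  - d * g1xy u l alpha beta.

End Defs.

From HB Require Import structures.
From mathcomp Require Import all_boot all_order all_algebra ring.
From mathcomp Require Import reals.
From mathcomp.real_closed Require Import complex.
Import Order.TTheory GRing.Theory Num.Theory.
Set Implicit Arguments. Unset Strict Implicit. Unset Printing Implicit Defensive.
Local Open Scope ring_scope.

(* On Lambda the quintic equals delta * sum_(m+n<=5) (5; m,n) S_mn x^(5-m-n) y^m z^n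
   (trinomial theorem).  Dividing by the conic xy - (beta x + alpha y) z + d z^2 leaves
   the cubic cofactor whose coefficients are the g's, and a remainder whose monomials
   are x^5, x^4y, x^4z, xy^4, y^4z, y^5 (coefficients S_00, S_10, S_01, S_40, S_50, S_41,
   zero because P, Q, R lie in Lambda), x^3z^2 and y^3z^2 (zero by the equations for
   beta and alpha), and z^3 times a quadric whose coefficients are the five conditions.
   Conversely, another cubic cofactor through P and Q differs from this one by an h
   with conic * h = delta z^3 * quadric; since the conic has an xy term, comparing
   coefficients forces h = 0 and the quadric = 0. *)

Lemma vanishing_poly_coef_eq0 (F : numDomainType) n (a : nat -> F) :
  (forall t : F, \sum_(i < n) a i * t ^+ i = 0) -> forall i, (i < n)%N -> a i = 0.
Proof.
move=> a_van i lt_in.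
have p0 : \poly_(j < n) a j = 0.
  apply: (@roots_geq_poly_eq0 _ _ [seq j%:R | j <- iota 0 n]).
  - by apply/allP => t _; rewrite /root horner_poly a_van.
  - by rewrite map_inj_uniq ?iota_uniq // => m k /eqP; rewrite eqr_nat => /eqP.
  - by rewrite size_map size_iota size_poly.
by have := coef_poly n a i; rewrite p0 coef0 lt_in => <-.
Qed.

Lemma vanishing_bipoly_coef_eq0 (F : numDomainType) n (a : nat -> nat -> F) :
  (forall y z : F, \sum_(b < n) \sum_(c < n) a b c * y ^+ b * z ^+ c = 0) ->
  forall b c, (b < n)%N -> (c < n)%N -> a b c = 0.
Proof.
move=> a_van b c lt_bn lt_cn.
have col_van y : forall c, (c < n)%N -> \sum_(b < n) a b c * y ^+ b = 0.
  apply: vanishing_poly_coef_eq0 => z; rewrite -[RHS](a_van y z) exchange_big.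
  by apply: eq_bigr => c' _; rewrite mulr_suml.
exact: (vanishing_poly_coef_eq0 (a := a^~ c) (fun y => col_van y c lt_cn)).
Qed.

Lemma exprD3n (R : comPzSemiRingType) (a b c : R) n :
  (a + b + c) ^+ n = \sum_(i < n.+1) \sum_(j < (n - i).+1)
     a ^+ (n - i - j) * b ^+ i * c ^+ j *+ ('C(n, i) * 'C(n - i, j)).
Proof.
rewrite addrAC exprDn; apply: eq_bigr => i _.
rewrite exprDn mulr_suml -sumrMnl; apply: eq_bigr => j _.
by rewrite mulrnAl -mulrnA mulrAC mulnC.
Qed.

Lemma cubicE (F : fieldType) (k : nat -> nat -> F) x y z :
  cubic k x y z = k 0 0 * z ^+ 3 + k 0 1 * y * z ^+ 2 + k 0 2 * y ^+ 2 * z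
   + k 0 3 * y ^+ 3 + k 1 0 * x * z ^+ 2 + k 1 1 * x * y * z + k 1 2 * x * y ^+ 2
   + k 2 0 * x ^+ 2 * z + k 2 1 * x ^+ 2 * y + k 3 0 * x ^+ 3.
Proof. by rewrite /cubic !big_ord_recr !big_ord0 /=; ring. Qed.

Lemma conic_mul_cubic_z3_eq0 (F : numFieldType) (d alpha beta : F)
    (h : nat -> nat -> F) (e1 e2 e3 e4 e5 : F) :
  h 3 0 = 0 -> h 0 3 = 0 ->
  (forall x y z, conic d alpha beta x y z * cubic h x y z =
     z ^+ 3 * (e1 * x ^+ 2 + e2 * y ^+ 2 + e3 * x * z + e4 * y * z + e5 * z ^+ 2)) ->
  [/\ e1 = 0, e2 = 0, e3 = 0, e4 = 0 & e5 = 0].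
Proof.
move=> h30 h03 conic_h.
(* [nth 0 (nth [::] tbl b) c] is the coefficient of y^b z^c in
   conic * cubic h - z^3 * quadric, dehomogenised at x = 1. *)
pose tbl := [::
  [:: 0; - beta * h 3 0; - beta * h 2 0 + d * h 3 0; - beta * h 1 0 + d * h 2 0 - e1;
      - beta * h 0 0 + d * h 1 0 - e3; d * h 0 0 - e5];
  [:: h 3 0; h 2 0 - beta * h 2 1 - alpha * h 3 0;
      h 1 0 - beta * h 1 1 - alpha * h 2 0 + d * h 2 1;
      h 0 0 - beta * h 0 1 - alpha * h 1 0 + d * h 1 1; - alpha * h 0 0 + d * h 0 1 - e4];
  [:: h 2 1; h 1 1 - beta * h 1 2 - alpha * h 2 1;
      h 0 1 - beta * h 0 2 - alpha * h 1 1 + d * h 1 2; - alpha * h 0 1 + d * h 0 2 - e2];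
  [:: h 1 2; h 0 2 - beta * h 0 3 - alpha * h 1 2; - alpha * h 0 2 + d * h 0 3];
  [:: h 0 3; - alpha * h 0 3]].
have tbl_eq0 b c : (b < 6)%N -> (c < 6)%N -> nth 0 (nth [::] tbl b) c = 0.
  apply: (vanishing_bipoly_coef_eq0 (a := fun b c => nth 0 (nth [::] tbl b) c)) => y z.
  rewrite -[RHS](subrr (conic d alpha beta 1 y z * cubic h 1 y z)) {2}conic_h.
  by rewrite cubicE /conic !big_ord_recr !big_ord0 /tbl /=; ring.
have h21 : h 2 1 = 0 := tbl_eq0 2 0 isT isT.
have h12 : h 1 2 = 0 := tbl_eq0 3 0 isT isT.
have h20 : h 2 0 = 0.
  by have := tbl_eq0 1 1 isT isT; rewrite /tbl /= h21 h30 !mulr0 !subr0.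
have h02 : h 0 2 = 0.
  by have := tbl_eq0 3 1 isT isT; rewrite /tbl /= h03 h12 !mulr0 !subr0.
have h11 : h 1 1 = 0.
  by have := tbl_eq0 2 1 isT isT; rewrite /tbl /= h12 h21 !mulr0 !subr0.
have h10 : h 1 0 = 0.
  by have := tbl_eq0 1 2 isT isT; rewrite /tbl /= h11 h20 h21 !mulr0 !subr0 addr0.
have h01 : h 0 1 = 0.
  by have := tbl_eq0 2 2 isT isT; rewrite /tbl /= h02 h11 h12 !mulr0 !subr0 addr0.
have h00 : h 0 0 = 0.
  by have := tbl_eq0 1 3 isT isT; rewrite /tbl /= h01 h10 h11 !mulr0 !subr0 addr0.
have oppr_eq0P (e : F) : - e = 0 -> e = 0 by move=> /eqP; rewrite oppr_eq0 => /eqP.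
split; apply: oppr_eq0P.
- by have := tbl_eq0 0 3 isT isT; rewrite /tbl /= h10 h20 !mulr0 !add0r.
- by have := tbl_eq0 2 3 isT isT; rewrite /tbl /= h01 h02 !mulr0 !add0r.
- by have := tbl_eq0 0 4 isT isT; rewrite /tbl /= h00 h10 !mulr0 !add0r.
- by have := tbl_eq0 1 4 isT isT; rewrite /tbl /= h00 h01 !mulr0 !add0r.
- by have := tbl_eq0 0 5 isT isT; rewrite /tbl /= h00 mulr0 sub0r.
Qed.

Section Division.
Variables (C : fieldType) (u l : 'I_5 -> C).

Definition moment m n : C := \sum_(i < 5) M u i * u i ^+ m * l i ^+ n.

Lemma delta_neq0 : injective u -> delta u != 0.
Proof.
move=> u_inj; apply/prodf_neq0 => j _; apply/prodf_neq0 => k lt_kj.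
by rewrite subr_eq0; apply: contraTneq lt_kj => /u_inj ->; rewrite ltnn.
Qed.

Lemma momentE m n : delta u != 0 -> moment m n = delta u * S u l m n.
Proof. by move=> delta_nz; rewrite /S mulrC divfK. Qed.

Lemma S_eq0_of_inLambda (v : 'I_5 -> C) m n :
  (forall i, v i = u i ^+ m * l i ^+ n) -> inLambda u v ->
  S u l m n = 0 /\ S u l m.+4 n = 0.
Proof.
move=> vE [v_1 v_4]; rewrite /S; split.
- rewrite (eq_bigr (fun i => M u i * v i)) ?v_1 ?mul0r // => i _.
  by rewrite /= vE; ring.
- rewrite (eq_bigr (fun i => M u i * u i ^+ 4 * v i)) ?v_4 ?mul0r // => i _.
  by rewrite /= vE -addn4 exprD; ring.
Qed.

Lemma Fres_expand x y z : Fres u l x y z =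
  \sum_(m < 6) \sum_(n < (5 - m).+1)
     moment m n * x ^+ (5 - m - n) * y ^+ m * z ^+ n *+ ('C(5, m) * 'C(5 - m, n)).
Proof.
rewrite /Fres; under eq_bigr do rewrite exprD3n mulr_sumr.
rewrite exchange_big; apply: eq_bigr => m _.
under eq_bigr do rewrite mulr_sumr.
rewrite exchange_big; apply: eq_bigr => n _.
rewrite /moment !mulr_suml -sumrMnl; apply: eq_bigr => i _.
by rewrite mulrnAr !exprMn; congr (_ *+ _); ring.
Qed.

Variables (alpha beta d : C).

Definition quotient_cubic (a b : nat) : C := delta u *
  match a, b with
  | 2, 1 => 10%:R * S u l 2 0
  | 1, 2 => 10%:R * S u l 3 0
  | 2, 0 => g1P u l beta
  | 0, 2 => g1Q u l alpha
  | 1, 1 => g1xy u l alpha beta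
  | 1, 0 => g2P u l alpha beta d
  | 0, 1 => g2Q u l alpha beta d
  | 0, 0 => g3 u l alpha beta d
  | _, _ => 0
  end.

Definition residual_quadric (x y z : C) : C :=
  (10%:R * S u l 0 3 + beta * g2P u l alpha beta d - g1P u l beta * d) * x ^+ 2
  + (10%:R * S u l 2 3 + alpha * g2Q u l alpha beta d - g1Q u l alpha * d) * y ^+ 2
  + (5%:R * S u l 0 4 + beta * g3 u l alpha beta d - g2P u l alpha beta d * d) * x * z
  + (5%:R * S u l 1 4 + alpha * g3 u l alpha beta d - g2Q u l alpha beta d * d) * y * z
  + (S u l 0 5 - g3 u l alpha beta d * d) * z ^+ 2.

Definition division_remainder (x y z : C) : C :=
  S u l 0 0 * x ^+ 5 + 5%:R * S u l 1 0 * x ^+ 4 * y + 5%:R * S u l 0 1 * x ^+ 4 * z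
  + 5%:R * S u l 4 0 * x * y ^+ 4 + 5%:R * S u l 4 1 * y ^+ 4 * z + S u l 5 0 * y ^+ 5
  + 10%:R * (S u l 2 0 * beta ^+ 2 + 2%:R * S u l 1 1 * beta + S u l 0 2) * x ^+ 3 * z ^+ 2
  + 10%:R * (S u l 3 0 * alpha ^+ 2 + 2%:R * S u l 3 1 * alpha + S u l 3 2) * y ^+ 3 * z ^+ 2
  + z ^+ 3 * residual_quadric x y z.

Lemma Fres_division x y z : delta u != 0 ->
  Fres u l x y z = conic d alpha beta x y z * cubic quotient_cubic x y z
                   + delta u * division_remainder x y z.
Proof.
move=> delta_nz; rewrite Fres_expand !big_ord_recr !big_ord0 /= !subSS !subn0.
do 5?rewrite !binE /=.
rewrite !momentE // cubicE /quotient_cubic /division_remainder /residual_quadric /conic /=.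
by rewrite /g3 /g2P /g2Q /g1P /g1Q /g1xy; ring.
Qed.

Lemma division_remainderE x y z :
  inLambda u (fun _ => 1) -> inLambda u u -> inLambda u l ->
  S u l 3 0 * alpha ^+ 2 + 2%:R * S u l 3 1 * alpha + S u l 3 2 = 0 ->
  S u l 2 0 * beta ^+ 2 + 2%:R * S u l 1 1 * beta + S u l 0 2 = 0 ->
  division_remainder x y z = z ^+ 3 * residual_quadric x y z.
Proof.
move=> P_Lambda Q_Lambda R_Lambda alpha_eq beta_eq.
have [S00 S40] : S u l 0 0 = 0 /\ S u l 4 0 = 0.
  by apply: (S_eq0_of_inLambda _ P_Lambda) => i; rewrite !expr0 mulr1.
have [S10 S50] : S u l 1 0 = 0 /\ S u l 5 0 = 0.
  by apply: (S_eq0_of_inLambda _ Q_Lambda) => i; rewrite expr0 mulr1.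
have [S01 S41] : S u l 0 1 = 0 /\ S u l 4 1 = 0.
  by apply: (S_eq0_of_inLambda _ R_Lambda) => i; rewrite expr0 mul1r.
by rewrite /division_remainder S00 S10 S01 S40 S41 S50 alpha_eq beta_eq; ring.
Qed.

End Division.

Theorem mainTheorem5 (R : realType) (u l : 'I_5 -> R[i]) (alpha beta : R[i]) :
  injective u ->
  (forall i, M u i != 0) ->
  (* P = (1,..,1), Q = u, R = l span Lambda *)
  inLambda u (fun _ => 1) -> inLambda u u -> inLambda u l ->
  (forall a b c : R[i], (forall i, a + b * u i + c * l i = 0) ->
     [/\ a = 0, b = 0 & c = 0]) ->
  S u l 3 0 * alpha ^+ 2 + 2%:R * S u l 3 1 * alpha + S u l 3 2 = 0 ->
  S u l 2 0 * beta ^+ 2 + 2%:R * S u l 1 1 * beta + S u l 0 2 = 0 ->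
  (exists (d : R[i]) (k : nat -> nat -> R[i]),
      [/\ cubic k 1 0 0 = 0, cubic k 0 1 0 = 0 &
          forall x y z, Fres u l x y z = conic d alpha beta x y z * cubic k x y z])
  <->
  (exists d : R[i],
      [/\ 10%:R * S u l 0 3 + beta * g2P u l alpha beta d - g1P u l beta * d = 0,
          10%:R * S u l 2 3 + alpha * g2Q u l alpha beta d - g1Q u l alpha * d = 0,
          5%:R * S u l 0 4 + beta * g3 u l alpha beta d - g2P u l alpha beta d * d = 0,
          5%:R * S u l 1 4 + alpha * g3 u l alpha beta d - g2Q u l alpha beta d * d = 0 &
          S u l 0 5 - g3 u l alpha beta d * d = 0]).
Proof.
move=> u_inj _ P_Lambda Q_Lambda R_Lambda _ alpha_eq beta_eq.
have delta_nz := delta_neq0 u_inj.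
have remainderE d x y z := @division_remainderE _ u l alpha beta d x y z
  P_Lambda Q_Lambda R_Lambda alpha_eq beta_eq.
split=> [[d [k [k_P k_Q Fres_k]]] | [d [E1 E2 E3 E4 E5]]]; exists d.
- pose h a b := (k a b - quotient_cubic u l alpha beta d a b) / delta u.
  have k30 : k 3 0 = 0 by rewrite -k_P cubicE; ring.
  have k03 : k 0 3 = 0 by rewrite -k_Q cubicE; ring.
  apply: (@conic_mul_cubic_z3_eq0 _ d alpha beta h).
  + by rewrite /h k30 /quotient_cubic /=; ring.
  + by rewrite /h k03 /quotient_cubic /=; ring.
  move=> x y z; have -> : cubic h x y z =
      (cubic k x y z - cubic (quotient_cubic u l alpha beta d) x y z) / delta u.
    by rewrite !cubicE /h; ring.
  rewrite mulrA mulrBr -Fres_k (Fres_division l alpha beta d) //.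
  by rewrite remainderE /residual_quadric; field.
- exists (quotient_cubic u l alpha beta d); split.
  + by rewrite cubicE /quotient_cubic /=; ring.
  + by rewrite cubicE /quotient_cubic /=; ring.
  move=> x y z; rewrite (Fres_division l alpha beta d) // remainderE.
  by rewrite /residual_quadric E1 E2 E3 E4 E5; ring.
Qed.
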